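(* Fix $b>0$, $c>0$, $0<\theta<c$, let $a\in\mathbb R$ vary, and consider the two-player complete-information contest with efforts $x,y\ge0$ and payoffs $P(x,y)-\theta x$, $1-P(x,y)-\theta y$, where $P(x,y)=\tfrac12+(x-y)\bigl(c-b(x+y)+axy\bigr)$ (no truncation). Total expected equilibrium effort (rent dissipation) equals $2x^*(a)$ on the pure-equilibrium region $\{a:b^2\ge a(c-\theta)\}$, where $x^*(a)=\frac{b-\sqrt{b^2-a(c-\theta)}}{a}$ for $a\ne0$ and $x^*(0)=\frac{c-\theta}{2b}$ is the symmetric equilibrium effort, and equals $2b/a$ on the mixed-equilibrium region $\{a:b^2<a(c-\theta)\}$ (for every mixed equilibrium). Rent dissipation is maximized at $b^2=a(c-\theta)$ (i.e. $\zeta=0$) rather than at the extreme of suppression: it increases in $a$ on the pure region and decreases in $a$ on the mixed region.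
   Context: $\zeta=\frac{b^2-a(c-\theta)}{a^2}$ for $a\neq0$. The prize is normalized to $1$, so rent dissipation is measured by total expected effort $E[x+y]$. *)

From HB Require Import structures.
From mathcomp Require Import all_boot all_order all_algebra.
From mathcomp Require Import all_classical all_reals all_analysis.
Set Implicit Arguments. Unset Strict Implicit. Unset Printing Implicit Defensive.
Import Order.TTheory GRing.Theory Num.Theory.
Import numFieldNormedType.Exports.
Local Open Scope classical_set_scope.
Local Open Scope ring_scope.

Definition Pwin {R : realType} (a b c x y : R) : R :=
  2^-1 + (x - y) * (c - b * (x + y) + a * x * y).

Definition payoff1 {R : realType} (a b c theta x y : R) : R :=
  Pwin a b c x y - theta * x.
Definition payoff2 {R : realType} (a b c theta x y : R) : R :=
  1 - Pwin a b c x y - theta * y.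

(* A mixed strategy: a probability law on efforts, supported on [0,+oo),
   with finite second moment (so all expected payoffs are well defined). *)
Definition admissible {R : realType} (mu : probability R R) : Prop :=
  mu [set x : R | 0 <= x] = 1%E /\
  mu.-integrable setT (fun x : R => (x ^+ 2)%:E).

Definition Epayoff1 {R : realType} (a b c theta : R)
  (mu nu : probability R R) : \bar R :=
  (\int[mu]_x \int[nu]_y (payoff1 a b c theta x y)%:E)%E.
Definition Epayoff2 {R : realType} (a b c theta : R)
  (mu nu : probability R R) : \bar R :=
  (\int[mu]_x \int[nu]_y (payoff2 a b c theta x y)%:E)%E.

(* (Mixed-strategy) Nash equilibrium; pure equilibria are the Dirac case. *)
Definition is_equilibrium {R : realType} (a b c theta : R)
  (mu nu : probability R R) : Prop :=
  [/\ admissible mu, admissible nu,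
      (forall mu' : probability R R, admissible mu' ->
         (Epayoff1 a b c theta mu' nu <= Epayoff1 a b c theta mu nu)%E) &
      (forall nu' : probability R R, admissible nu' ->
         (Epayoff2 a b c theta mu nu' <= Epayoff2 a b c theta mu nu)%E)].

Definition total_effort {R : realType} (mu nu : probability R R) : \bar R :=
  (\int[mu]_x x%:E + \int[nu]_y y%:E)%E.

Definition xstar {R : realType} (b c theta a : R) : R :=
  if a == 0 then (c - theta) / (2 * b)
  else (b - Num.sqrt (b ^+ 2 - a * (c - theta))) / a.

Definition rent_diss {R : realType} (b c theta a : R) : R :=
  if a * (c - theta) <= b ^+ 2 then 2 * xstar b c theta a
  else 2 * b / a.

(* Expected payoffs are affine in a player's own first two moments: with
   k = c - theta, player 1 earns a constant plus
   (k - a E[y^2]) E[x] - (b - a E[y]) E[x^2] against y, and symmetrically.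
   Equilibria are thus exactly the pairs of moment vectors satisfying the
   first-order conditions of these linear problems over the moment set
   {0 <= M1, M1^2 <= M2}, and Dirac deviations suffice to test optimality.
   If b - a E[.] > 0 for both players, both play pure and their common effort
   is the root x*(a) of a x^2 - 2 b x + k = 0 with b - a x > 0.  Otherwise both
   coefficients vanish, so E[x] = E[y] = b / a, which forces b^2 <= a k.
   Equilibria exist: the Dirac law at x*(a), resp. the law putting mass
   b^2 / (a k) at k / b and the rest at 0.  The comparative statics in a are
   elementary. *)

From HB Require Import structures.
From mathcomp Require Import all_boot all_order all_algebra.
From mathcomp Require Import all_classical all_reals all_analysis.
From mathcomp Require Import measurable_realfun ring lra.
Import Order.TTheory GRing.Theory Num.Theory.
Local Open Scope classical_set_scope.
Local Open Scope ring_scope.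

Lemma measurable_nonneg {R : realType} : measurable [set x : R | 0 <= x].
Proof.
rewrite (_ : [set x : R | 0 <= x] = `[0, +oo[%classic); first exact: measurable_itv.
by apply/seteqP; split => x /=; rewrite in_itv /= andbT.
Qed.

Section moments.
Context {R : realType} (mu : probability R R).
Hypothesis hmu : admissible mu.

Definition moment1 : R := fine (\int[mu]_x x%:E)%E.
Definition moment2 : R := fine (\int[mu]_x (x ^+ 2)%:E)%E.

Let integrable_cst (r : R) : mu.-integrable setT (fun _ => r%:E).
Proof. exact: finite_measure_integrable_cst. Qed.

Let integrable_sqr : mu.-integrable setT (fun x : R => (x ^+ 2)%:E).
Proof. by case: hmu. Qed.

Lemma admissible_integrable_id : mu.-integrable setT (fun x : R => x%:E).
Proof.
apply: (@le_integrable _ _ _ mu setT measurableT _ (fun x => (1 + x ^+ 2)%:E)).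
- exact/measurable_EFinP.
- move=> x _; rewrite !abse_EFin lee_fin [leRHS]ger0_norm ?addr_ge0 ?sqr_ge0//.
  rewrite -real_normK ?num_real//; have := sqr_ge0 (`|x| - 1); nra.
- apply: (eq_integrable measurableT (fun x : R => 1%:E + (x ^+ 2)%:E)%E).
    by move=> x _; rewrite /= EFinD.
  exact: integrableD.
Qed.

Lemma moment1E : (\int[mu]_x x%:E)%E = moment1%:E.
Proof. by rewrite fineK //; exact/integrable_fin_num/admissible_integrable_id. Qed.

Lemma moment2E : (\int[mu]_x (x ^+ 2)%:E)%E = moment2%:E.
Proof. by rewrite fineK //; exact: integrable_fin_num. Qed.

Lemma integral_quadratic (p0 p1 p2 : R) :
  (\int[mu]_x (p0 + p1 * x + p2 * x ^+ 2)%:E)%E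
  = (p0 + p1 * moment1 + p2 * moment2)%:E.
Proof.
have int_lin : mu.-integrable setT (fun x : R => p0%:E + p1%:E * x%:E)%E.
  exact/integrableD/integrableZl/admissible_integrable_id.
rewrite (eq_integral (fun x => p0%:E + p1%:E * x%:E + p2%:E * (x ^+ 2)%:E))%E;
  last by move=> x _; rewrite -!EFinM -!EFinD.
rewrite integralD //; last exact: integrableZl.
rewrite integralD //; last exact/integrableZl/admissible_integrable_id.
rewrite integral_cst //= probability_setT mule1.
rewrite integralZl ?integralZl //; last exact: admissible_integrable_id.
by rewrite moment1E moment2E -!EFinM -!EFinD.
Qed.

Lemma sqr_moment1_le_moment2 : moment1 ^+ 2 <= moment2.
Proof.
have : (0 <= \int[mu]_x ((x - moment1) ^+ 2)%:E)%E.
  by apply: integral_ge0 => x _; rewrite lee_fin sqr_ge0.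
rewrite (eq_integral (fun x => (moment1 ^+ 2 + (- 2 * moment1) * x + 1 * x ^+ 2)%:E));
  last by move=> x _; congr (_%:E); ring.
rewrite integral_quadratic lee_fin; lra.
Qed.

(* Since mu is carried by [0, +oo), the mean only sees the positive part of x. *)
Lemma integral_id_max0 :
  (\int[mu]_x x%:E)%E = (\int[mu]_x (Num.max x 0)%:E)%E.
Proof.
apply: (ae_eq_integral (fun x : R => (Num.max x 0)%:E)) => //.
- by apply/measurable_EFinP; apply: measurable_maxr.
- exists (~` [set x : R | 0 <= x]); split.
  + exact: (measurableC measurable_nonneg).
  + rewrite /= probability_setC; last exact: measurable_nonneg.
    by rewrite hmu.1 subee.
  + by move=> x /= hx x0; apply: hx => _; rewrite (max_idPl x0).
Qed.

Lemma moment1_ge0 : 0 <= moment1.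
Proof.
rewrite -lee_fin -moment1E integral_id_max0.
by apply: integral_ge0 => x _; rewrite lee_fin le_max lexx orbT.
Qed.

Lemma moments_feasible : 0 <= moment1 /\ moment1 ^+ 2 <= moment2.
Proof. by split; [exact: moment1_ge0 | exact: sqr_moment1_le_moment2]. Qed.

End moments.

Section two_point.
Context {R : realType} (q : R) (hq0 : 0 <= q) (hq1 : q <= 1) (z : R).

Let hq : 0 <= 1 - q. Proof. by rewrite subr_ge0. Qed.

Definition two_point_measure : set R -> \bar R :=
  measure_add (mscale (NngNum hq) \d_(0 : R)) (mscale (NngNum hq0) \d_z).

HB.instance Definition _ := Measure.on two_point_measure.

Lemma two_point_measureE (A : set R) :
  two_point_measure A = ((1 - q)%R%:E * \d_(0%R : R) A + q%:E * \d_z A)%E.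
Proof. by rewrite /two_point_measure measure_addE. Qed.

Let two_point_measure_setT : two_point_measure setT = 1%E.
Proof. by rewrite two_point_measureE !diracT !mule1 -EFinD subrK. Qed.

HB.instance Definition _ :=
  Measure_isProbability.Build _ _ _ two_point_measure two_point_measure_setT.

Definition two_point : probability R R := two_point_measure.

Lemma two_point_ge0_integral (f : R -> R) :
  measurable_fun setT f -> (forall x, 0 <= f x) ->
  (\int[two_point]_x (f x)%:E)%E = ((1 - q) * f 0 + q * f z)%:E.
Proof.
move=> mf f_ge0.
have mfE : measurable_fun setT (fun x => (f x)%:E) by exact/measurable_EFinP.
have fE_ge0 x : setT x -> (0 <= (f x)%:E)%E by rewrite lee_fin.
rewrite ge0_integral_measure_add // !ge0_integral_mscale // !integral_dirac //.
by rewrite !diracT !mul1e -!EFinM -EFinD.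
Qed.

Lemma two_point_moment2 : moment2 two_point = q * z ^+ 2.
Proof.
rewrite /moment2 two_point_ge0_integral /=; last exact: sqr_ge0.
  by rewrite expr0n mulr0 add0r.
exact: measurable_funX.
Qed.

Hypothesis hz : 0 <= z.

Lemma two_point_admissible : admissible two_point.
Proof.
split.
  rewrite /= two_point_measureE !diracE !mem_set //=.
  by rewrite !mule1 -EFinD subrK.
apply/integrableP; split; first exact/measurable_EFinP/measurable_funX.
under eq_integral do rewrite abse_EFin ger0_norm ?sqr_ge0 //.
by rewrite two_point_ge0_integral ?ltry // => x; exact: sqr_ge0.
Qed.

Lemma two_point_moment1 : moment1 two_point = q * z.
Proof.
rewrite /moment1 (integral_id_max0 _ two_point_admissible).
rewrite two_point_ge0_integral /=; last by move=> x; rewrite le_max lexx orbT.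
  by rewrite maxxx mulr0 add0r (max_idPl hz).
exact: measurable_maxr.
Qed.

End two_point.
Arguments two_point {R q} hq0 hq1 z.

Section expected_payoffs.
Context {R : realType} (a b c theta : R).
Variables (mu nu : probability R R).
Hypotheses (hmu : admissible mu) (hnu : admissible nu).

Lemma Epayoff1E : Epayoff1 a b c theta mu nu =
  (2^-1 - c * moment1 nu + b * moment2 nu
   + ((c - theta - a * moment2 nu) * moment1 mu
      - (b - a * moment1 nu) * moment2 mu))%:E.
Proof.
rewrite /Epayoff1 (eq_integral (fun x => (2^-1 - c * moment1 nu + b * moment2 nu
  + (c - theta - a * moment2 nu) * x + (a * moment1 nu - b) * x ^+ 2)%:E)).
  by rewrite integral_quadratic //; congr (_%:E); ring.
move=> x _; rewrite (eq_integral (fun y => (2^-1 + (c - theta) * x - b * x ^+ 2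
  + (a * x ^+ 2 - c) * y + (b - a * x) * y ^+ 2)%:E)).
  by rewrite integral_quadratic //; congr (_%:E); ring.
by move=> y _; rewrite /payoff1 /Pwin; congr (_%:E); ring.
Qed.

Lemma Epayoff2E : Epayoff2 a b c theta mu nu =
  (2^-1 - c * moment1 mu + b * moment2 mu
   + ((c - theta - a * moment2 mu) * moment1 nu
      - (b - a * moment1 mu) * moment2 nu))%:E.
Proof.
rewrite /Epayoff2 (eq_integral (fun x => (2^-1 + (c - theta) * moment1 nu
  - b * moment2 nu + (a * moment2 nu - c) * x + (b - a * moment1 nu) * x ^+ 2)%:E)).
  by rewrite integral_quadratic //; congr (_%:E); ring.
move=> x _; rewrite (eq_integral (fun y => (2^-1 - c * x + b * x ^+ 2
  + (c - theta - a * x ^+ 2) * y + (a * x - b) * y ^+ 2)%:E)).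
  by rewrite integral_quadratic //; congr (_%:E); ring.
by move=> y _; rewrite /payoff2 /Pwin; congr (_%:E); field.
Qed.

Lemma total_effortE : total_effort mu nu = (moment1 mu + moment1 nu)%:E.
Proof. by rewrite /total_effort !moment1E. Qed.

End expected_payoffs.

Section first_order_conditions.
Context {R : realType}.

(* First-order conditions for maximising A * M1 - B * M2 over the moment
   pairs of laws on [0, +oo), i.e. over 0 <= M1 and M1 ^+ 2 <= M2. *)
Definition kkt (A B M1 M2 : R) : Prop :=
  [/\ 0 <= B, B * (M2 - M1 ^+ 2) = 0, A <= 2 * B * M1
    & M1 * (A - 2 * B * M1) = 0].

Lemma kkt0 (M1 M2 : R) : kkt 0 0 M1 M2.
Proof. by rewrite /kkt !mulr0 !mul0r subrr mulr0. Qed.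

Lemma kkt_max {A B M1 M2 N1 N2 : R} : kkt A B M1 M2 ->
  0 <= N1 /\ N1 ^+ 2 <= N2 -> A * N1 - B * N2 <= A * M1 - B * M2.
Proof.
case=> B_ge0 BM2 D_le0 M1D [N1_ge0 N2_ge].
have := mulr_ge0 B_ge0 (sqr_ge0 (M1 - N1)).
have : 0 <= B * (N2 - N1 ^+ 2) by rewrite mulr_ge0 // subr_ge0.
have : 0 <= (2 * B * M1 - A) * N1 by rewrite mulr_ge0 // subr_ge0.
nra.
Qed.

Lemma bounded_quadratic_ge0 {A B V : R} :
  (forall x, 0 <= x -> A * x - B * x ^+ 2 <= V) -> 0 <= B.
Proof.
move=> ub; rewrite leNgt; apply/negP => B_lt0.
set x := 1 + (`|A| + `|V|) / - B.
have x_ge1 : 1 <= x by rewrite lerDl divr_ge0 // ?addr_ge0 // oppr_ge0 ltW.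
have Bx : - B * x = - B + `|A| + `|V|.
  by rewrite /x; field; rewrite lt_eqF.
have hA : - A <= `|A| by rewrite -normrN ler_norm.
have hV : V <= `|V| := ler_norm V.
have nV_ge0 := normr_ge0 V.
have gx : A * x - B * x ^+ 2 = x * (A + (- B + `|A| + `|V|)).
  by rewrite -Bx; ring.
have := ub x (le_trans ler01 x_ge1); rewrite gx.
have : 0 <= (x - 1) * (A + (- B + `|A| + `|V|)).
  by rewrite mulr_ge0 ?subr_ge0 //; lra.
nra.
Qed.

Lemma quadratic_argmax (A B M1 : R) : 0 <= B -> 0 <= M1 ->
  (forall x, 0 <= x -> A * x - B * x ^+ 2 <= A * M1 - B * M1 ^+ 2) ->
  A <= 2 * B * M1 /\ M1 * (A - 2 * B * M1) = 0.
Proof.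
move=> B_ge0 M1_ge0 argmax; set D := A - 2 * B * M1.
(* g (M1 + t) - g M1 = t (D - B t) for g x = A x - B x^2. *)
have D_le0 : D <= 0.
  rewrite leNgt; apply/negP => D_gt0.
  have B1_gt0 : 0 < B + 1 by rewrite ltr_wpDl.
  have := argmax (M1 + D / (B + 1)) (addr_ge0 M1_ge0 (divr_ge0 (ltW D_gt0) (ltW B1_gt0))).
  have -> : A * (M1 + D / (B + 1)) - B * (M1 + D / (B + 1)) ^+ 2
          = A * M1 - B * M1 ^+ 2 + (D / (B + 1)) ^+ 2.
    by rewrite /D; field; rewrite gt_eqF.
  have : 0 < (D / (B + 1)) ^+ 2 by rewrite exprn_gt0 // divr_gt0.
  lra.
split; first by rewrite -subr_le0.
have [->|M1_neq0] := eqVneq M1 0; first by rewrite mul0r.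
have [D_eq0|D_neq0] := eqVneq D 0; first by rewrite D_eq0 mulr0.
have M1_gt0 : 0 < M1 by rewrite lt_neqAle eq_sym M1_neq0.
have D_lt0 : D < 0 by rewrite lt_neqAle D_neq0.
have den_gt0 : 0 < B * M1 - D by have := mulr_ge0 B_ge0 M1_ge0; lra.
have x_ge0 : 0 <= B * M1 ^+ 2 / (B * M1 - D).
  by rewrite divr_ge0 ?mulr_ge0 ?sqr_ge0 // ltW.
have := argmax _ x_ge0.
have -> : A * (B * M1 ^+ 2 / (B * M1 - D)) - B * (B * M1 ^+ 2 / (B * M1 - D)) ^+ 2
        = A * M1 - B * M1 ^+ 2 + M1 * (- D) ^+ 3 / (B * M1 - D) ^+ 2.
  by rewrite /D; field; rewrite gt_eqF.
have : 0 < M1 * (- D) ^+ 3 / (B * M1 - D) ^+ 2.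
  by rewrite divr_gt0 ?mulr_gt0 ?exprn_gt0 ?oppr_gt0.
lra.
Qed.

Lemma pure_max_kkt (A B M1 M2 : R) : 0 <= M1 /\ M1 ^+ 2 <= M2 ->
  (forall x, 0 <= x -> A * x - B * x ^+ 2 <= A * M1 - B * M2) ->
  kkt A B M1 M2.
Proof.
move=> [M1_ge0 M2_ge] max_M; have B_ge0 := bounded_quadratic_ge0 max_M.
have BM2 : B * (M2 - M1 ^+ 2) = 0 by have := max_M M1 M1_ge0; nra.
have [D_le0 M1D] : A <= 2 * B * M1 /\ M1 * (A - 2 * B * M1) = 0.
  by apply: quadratic_argmax => // x /max_M; nra.
by split.
Qed.

Lemma kkt_gt0 {A B M1 M2 : R} : kkt A B M1 M2 -> 0 < B -> 0 < M1 ->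
  M2 = M1 ^+ 2 /\ A = 2 * B * M1.
Proof.
case=> _ BM2 _ M1D B_gt0 M1_gt0; split; apply/eqP; rewrite -subr_eq0.
- by move/eqP: BM2; rewrite mulf_eq0 gt_eqF.
- by move/eqP: M1D; rewrite mulf_eq0 gt_eqF.
Qed.

End first_order_conditions.

(* The first two moments (M1, M2) and (m1, m2) of the players' laws satisfy
   the first-order conditions for the coefficients of Epayoff1E, Epayoff2E. *)
Definition moment_equilibrium {R : realType} (a b k M1 M2 m1 m2 : R) : Prop :=
  [/\ 0 <= M1 /\ M1 ^+ 2 <= M2, 0 <= m1 /\ m1 ^+ 2 <= m2,
      kkt (k - a * m2) (b - a * m1) M1 M2 & kkt (k - a * M2) (b - a * M1) m1 m2].

Section equilibrium_moments.
Context {R : realType} (a b c theta : R) (mu nu : probability R R).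

Lemma is_equilibrium_moments : is_equilibrium a b c theta mu nu ->
  moment_equilibrium a b (c - theta)
    (moment1 mu) (moment2 mu) (moment1 nu) (moment2 nu).
Proof.
case=> hmu hnu max1 max2.
have dirac_admissible (x : R) : 0 <= x -> admissible (two_point ler01 (lexx 1) x).
  exact: two_point_admissible.
split; [exact: moments_feasible | exact: moments_feasible | |].
- apply: pure_max_kkt; [exact: moments_feasible |].
  move=> x x_ge0; have hx := dirac_admissible x x_ge0.
  have := max1 _ hx; rewrite !Epayoff1E // lee_fin lerD2l.
  by rewrite two_point_moment1 // two_point_moment2 !mul1r.
- apply: pure_max_kkt; [exact: moments_feasible |].
  move=> y y_ge0; have hy := dirac_admissible y y_ge0.
  have := max2 _ hy; rewrite !Epayoff2E // lee_fin lerD2l.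
  by rewrite two_point_moment1 // two_point_moment2 !mul1r.
Qed.

Lemma moment_equilibrium_is_equilibrium : admissible mu -> admissible nu ->
  moment_equilibrium a b (c - theta)
    (moment1 mu) (moment2 mu) (moment1 nu) (moment2 nu) ->
  is_equilibrium a b c theta mu nu.
Proof.
move=> hmu hnu [_ _ kkt1 kkt2]; split=> // [mu' hmu'|nu' hnu'].
- rewrite !Epayoff1E // lee_fin lerD2l.
  by apply: (kkt_max kkt1); exact: moments_feasible.
- rewrite !Epayoff2E // lee_fin lerD2l.
  by apply: (kkt_max kkt2); exact: moments_feasible.
Qed.

End equilibrium_moments.

Lemma kkt_symmetric_equilibrium {R : realType} (a b c theta : R)
    (mu : probability R R) : admissible mu ->
  kkt (c - theta - a * moment2 mu) (b - a * moment1 mu) (moment1 mu) (moment2 mu) ->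
  is_equilibrium a b c theta mu mu.
Proof.
move=> hmu kkt_mu; apply: moment_equilibrium_is_equilibrium => //.
by have feasible := moments_feasible _ hmu; split.
Qed.

Lemma moment_equilibrium_sym {R : realType} {a b k M1 M2 m1 m2 : R} :
  moment_equilibrium a b k M1 M2 m1 m2 -> moment_equilibrium a b k m1 m2 M1 M2.
Proof. by case. Qed.

Section rent_dissipation.
Context {R : realType} (b c theta : R).
Hypotheses (hb : 0 < b) (hk : 0 < c - theta).
Local Notation k := (c - theta).

Lemma xstarE a : a * k <= b ^+ 2 ->
  xstar b c theta a = k / (b + Num.sqrt (b ^+ 2 - a * k)).
Proof.
move=> hak; rewrite /xstar; case: eqP => [->|/eqP a_neq0].
  by rewrite mul0r subr0 sqrtr_sqr ger0_norm ?(ltW hb) // -mulr2n mulr_natl.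
have s_ge0 := sqrtr_ge0 (b ^+ 2 - a * k).
have s2 : Num.sqrt (b ^+ 2 - a * k) ^+ 2 = b ^+ 2 - a * k.
  by rewrite sqr_sqrtr // subr_ge0.
apply/eqP; rewrite eqr_div //; last by rewrite gt_eqF // ltr_wpDr.
by apply/eqP; move: s2; set s := Num.sqrt _ => s2; nra.
Qed.

Lemma xstar_spec {a : R} : a * k <= b ^+ 2 ->
  let x := xstar b c theta a in
  [/\ 0 <= x, 0 <= b - a * x & k - a * x ^+ 2 = 2 * (b - a * x) * x].
Proof.
move=> hak /=; rewrite xstarE //.
have s_ge0 := sqrtr_ge0 (b ^+ 2 - a * k).
have s2 : Num.sqrt (b ^+ 2 - a * k) ^+ 2 = b ^+ 2 - a * k.
  by rewrite sqr_sqrtr // subr_ge0.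
move: s_ge0 s2; set s := Num.sqrt _ => s_ge0 s2.
have bs_gt0 : 0 < b + s by rewrite ltr_wpDr.
have ax : a * (k / (b + s)) = b - s.
  by apply: (mulIf (lt0r_neq0 bs_gt0)); rewrite -mulrA divfK ?gt_eqF //; nra.
rewrite ax subKr; split=> //; first by rewrite divr_ge0 // ltW.
by rewrite expr2 mulrA ax; field; rewrite gt_eqF.
Qed.

Lemma xstar_unique {a x : R} : 0 < b - a * x -> k - a * x ^+ 2 = 2 * (b - a * x) * x ->
  a * k <= b ^+ 2 /\ xstar b c theta a = x.
Proof.
move=> B_gt0 foc.
have kE : k = 2 * b * x - a * x ^+ 2 by rewrite -[LHS](subrK (a * x ^+ 2)) foc; ring.
have disc : b ^+ 2 - a * k = (b - a * x) ^+ 2 by rewrite kE; ring.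
have hak : a * k <= b ^+ 2 by rewrite -subr_ge0 disc sqr_ge0.
split=> //; rewrite xstarE // disc sqrtr_sqr ger0_norm ?ltW // kE.
by field; rewrite gt_eqF // ltr_wpDl ?ltW.
Qed.

Lemma rent_diss_mixed a : 0 < a -> b ^+ 2 <= a * k ->
  rent_diss b c theta a = 2 * b / a.
Proof.
move=> a_gt0 hak; rewrite /rent_diss; case: ifP => // hak'.
have ak : a * k = b ^+ 2 by apply/le_anti/andP.
rewrite xstarE // ak subrr sqrtr0 addr0 -[k](mulKf (lt0r_neq0 a_gt0)) ak.
by field; rewrite !gt_eqF.
Qed.

Lemma moment_equilibrium_mixed {a M1 M2 m1 m2 : R} :
  moment_equilibrium a b k M1 M2 m1 m2 -> b - a * m1 = 0 ->
  M1 + m1 = rent_diss b c theta a.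
Proof.
case=> [[M1_ge0 M2_ge] [m1_ge0 m2_ge] kkt1 kkt2] B1_eq0.
have [_ _ A1_le0 M1A1] := kkt1; rewrite B1_eq0 mulr0 mul0r ?subr0 in A1_le0 M1A1.
have am1 : a * m1 = b by lra.
have m1_gt0 : 0 < m1.
  rewrite lt_neqAle m1_ge0 andbT; apply: contraTneq hb => m1_eq0.
  by rewrite -am1 -m1_eq0 mulr0 ltxx.
have a_gt0 : 0 < a by rewrite -(pmulr_lgt0 _ m1_gt0) am1.
have am2 : a * m2 = k.
  apply/eqP; rewrite eq_sym -subr_eq0 eq_le A1_le0 /= leNgt; apply/negP => A1_lt0.
  have M1_eq0 : M1 = 0.
    by move/eqP: M1A1; rewrite mulf_eq0 (lt_eqF A1_lt0) orbF => /eqP.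
  rewrite M1_eq0 mulr0 subr0 in kkt2.
  have [m2E A2E] := kkt_gt0 kkt2 hb m1_gt0.
  have : 0 <= a * M2 by rewrite mulr_ge0 ?(ltW a_gt0) ?(le_trans (sqr_ge0 M1) M2_ge).
  have : a * m2 = b * m1 by rewrite m2E expr2 mulrA am1.
  nra.
have [B2_eq0|B2_neq0] := eqVneq (b - a * M1) 0.
  rewrite rent_diss_mixed //; last by rewrite -am2 -am1 expr2 -mulrA ler_pM2l //; nra.
  apply: (mulfI (lt0r_neq0 a_gt0)).
  by rewrite mulrDr am1 (_ : a * M1 = b); [field; rewrite gt_eqF | lra].
exfalso; have [B2_ge0 _ _ _] := kkt2.
have B2_gt0 : 0 < b - a * M1 by rewrite lt_neqAle eq_sym B2_neq0.
have [m2E A2E] := kkt_gt0 kkt2 B2_gt0 m1_gt0.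
have : a ^+ 2 * M1 ^+ 2 <= a ^+ 2 * M2 by rewrite ler_pM2l ?exprn_gt0.
have : 0 < (b - a * M1) ^+ 2 by rewrite exprn_gt0.
have : a * (k - a * M2) = a * (2 * (b - a * M1) * m1) by rewrite A2E.
rewrite -am2 m2E; nra.
Qed.

Lemma moment_equilibrium_pure_gt0 {a M1 M2 m1 m2 : R} :
  moment_equilibrium a b k M1 M2 m1 m2 ->
  0 < b - a * m1 -> 0 < b - a * M1 -> 0 < M1.
Proof.
case=> [[M1_ge0 M2_ge] [m1_ge0 m2_ge] kkt1 kkt2] B1_gt0 B2_gt0.
rewrite lt_neqAle M1_ge0 andbT eq_sym; apply/eqP => M1_eq0.
have [_ B1M2 A1_le _] := kkt1; rewrite M1_eq0 mulr0 in A1_le.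
have M2_eq0 : M2 = 0.
  by move/eqP: B1M2; rewrite M1_eq0 expr0n subr0 mulf_eq0 gt_eqF //= => /eqP.
rewrite M1_eq0 M2_eq0 !mulr0 !subr0 in kkt2.
have [_ _ A2_le _] := kkt2.
have m1_gt0 : 0 < m1.
  by rewrite -(pmulr_rgt0 _ (_ : 0 < 2 * b)) ?(lt_le_trans hk A2_le) ?mulr_gt0.
have [m2E A2E] := kkt_gt0 kkt2 hb m1_gt0.
have := mulr_gt0 m1_gt0 B1_gt0; have := mulr_gt0 m1_gt0 hb.
rewrite m2E in A1_le; nra.
Qed.

Lemma moment_equilibrium_total {a M1 M2 m1 m2 : R} :
  moment_equilibrium a b k M1 M2 m1 m2 -> M1 + m1 = rent_diss b c theta a.
Proof.
move=> eqm; have eqm' := moment_equilibrium_sym eqm.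
have [_ _ [B1_ge0 _ _ _] [B2_ge0 _ _ _]] := eqm.
have [B1_eq0|B1_neq0] := eqVneq (b - a * m1) 0.
  exact: moment_equilibrium_mixed eqm B1_eq0.
have [B2_eq0|B2_neq0] := eqVneq (b - a * M1) 0.
  by rewrite addrC; exact: moment_equilibrium_mixed eqm' B2_eq0.
have B1_gt0 : 0 < b - a * m1 by rewrite lt_neqAle eq_sym B1_neq0.
have B2_gt0 : 0 < b - a * M1 by rewrite lt_neqAle eq_sym B2_neq0.
have M1_gt0 := moment_equilibrium_pure_gt0 eqm B1_gt0 B2_gt0.
have m1_gt0 := moment_equilibrium_pure_gt0 eqm' B2_gt0 B1_gt0.
have [_ _ kkt1 kkt2] := eqm.
have [M2E A1E] := kkt_gt0 kkt1 B1_gt0 M1_gt0.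
have [m2E A2E] := kkt_gt0 kkt2 B2_gt0 m1_gt0.
(* Subtracting the two first-order conditions gives (M1 - m1) (B1 + B2) = 0. *)
have m1E : m1 = M1.
  apply/eqP; rewrite eq_sym -subr_eq0 -(mulIr_eq0 _ (rregP (lt0r_neq0 (addr_gt0 B1_gt0 B2_gt0)))).
  by apply/eqP; rewrite m2E M2E in A1E A2E; nra.
rewrite m1E in B1_gt0 A1E m2E *; rewrite m2E in A1E.
have [hak xE] := xstar_unique B1_gt0 A1E.
by rewrite /rent_diss hak xE mulr_natl mulr2n.
Qed.

Lemma rent_diss_lt_pure a1 a2 : a1 < a2 -> a2 * k <= b ^+ 2 ->
  rent_diss b c theta a1 < rent_diss b c theta a2.
Proof.
move=> a12 h2; have k12 : a1 * k < a2 * k by rewrite ltr_pM2r.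
have h1 : a1 * k <= b ^+ 2 := le_trans (ltW k12) h2.
have pos_den a : 0 < b + Num.sqrt (b ^+ 2 - a * k) by rewrite ltr_wpDr ?sqrtr_ge0.
rewrite /rent_diss h1 h2 !xstarE // ltr_pM2l // ltr_pM2l // ltf_pV2 ?posrE //.
rewrite ltrD2l ltr_sqrt; lra.
Qed.

Lemma rent_diss_gt_mixed a1 a2 : b ^+ 2 <= a1 * k -> a1 < a2 ->
  rent_diss b c theta a2 < rent_diss b c theta a1.
Proof.
move=> h1 a12.
have a1_gt0 : 0 < a1 by rewrite -(pmulr_lgt0 _ hk) (lt_le_trans _ h1) ?exprn_gt0.
have h2 : b ^+ 2 <= a2 * k by rewrite (le_trans h1) // ler_pM2r // ltW.
have a2_gt0 := lt_trans a1_gt0 a12.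
rewrite !rent_diss_mixed // ltr_pM2l ?mulr_gt0 //.
by rewrite ltf_pV2 ?posrE.
Qed.

Lemma rent_diss_max a : a != b ^+ 2 / k ->
  rent_diss b c theta a < rent_diss b c theta (b ^+ 2 / k).
Proof.
have a0k : b ^+ 2 / k * k = b ^+ 2 by rewrite divfK ?gt_eqF.
case: (ltgtP a (b ^+ 2 / k)) => // [a_lt|a_gt] _.
- by apply: rent_diss_lt_pure; rewrite ?a0k.
- by apply: rent_diss_gt_mixed; rewrite ?a0k.
Qed.

Lemma exists_equilibrium a :
  exists mu nu : probability R R, is_equilibrium a b c theta mu nu.
Proof.
have [hak|hak] := leP (a * k) (b ^+ 2).
  have [x_ge0 B_ge0 foc] := xstar_spec hak.
  set x := xstar b c theta a in x_ge0 B_ge0 foc.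
  pose mu := two_point ler01 (lexx 1) x.
  exists mu, mu; apply: kkt_symmetric_equilibrium; first exact: two_point_admissible.
  rewrite two_point_moment1 // two_point_moment2 !mul1r.
  by rewrite /kkt foc !subrr !mulr0.
have a_gt0 : 0 < a by rewrite -(pmulr_lgt0 _ hk) (le_lt_trans _ hak) ?sqr_ge0.
(* Moments b / a and k / a make both payoff coefficients vanish. *)
pose q := b ^+ 2 / (a * k); pose z := k / b.
have q_ge0 : 0 <= q by rewrite divr_ge0 ?sqr_ge0 ?mulr_ge0 ?ltW.
have q_le1 : q <= 1 by rewrite ler_pdivrMr ?mulr_gt0 // mul1r ltW.
have z_ge0 : 0 <= z by rewrite divr_ge0 ?ltW.
pose mu := two_point q_ge0 q_le1 z.
exists mu, mu; apply: kkt_symmetric_equilibrium; first exact: two_point_admissible.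
have m1E : moment1 mu = b / a.
  by rewrite two_point_moment1 // /q /z; field; rewrite !gt_eqF.
have m2E : moment2 mu = k / a.
  by rewrite two_point_moment2 /q /z; field; rewrite !gt_eqF.
rewrite m1E m2E ![a * _]mulrC !divfK ?gt_eqF // !subrr; exact: kkt0.
Qed.

End rent_dissipation.

Theorem corollary2 (R : realType) (b c theta : R) :
  0 < b -> 0 < c -> 0 < theta -> theta < c ->
  (* equilibria exist for every a *)
  (forall a : R, exists mu nu : probability R R,
      is_equilibrium a b c theta mu nu) /\
  (* every equilibrium has total expected effort equal to rent_diss a,
     i.e. 2 x*(a) on the pure region and 2b/a on the mixed region *)
  (forall (a : R) (mu nu : probability R R),
      is_equilibrium a b c theta mu nu ->
      total_effort mu nu = (rent_diss b c theta a)%:E) /\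
  (* strictly increasing in a on the pure region b^2 >= a (c - theta) *)
  (forall a1 a2 : R, a1 < a2 -> a2 * (c - theta) <= b ^+ 2 ->
      rent_diss b c theta a1 < rent_diss b c theta a2) /\
  (* strictly decreasing in a on the mixed region b^2 < a (c - theta) *)
  (forall a1 a2 : R, b ^+ 2 < a1 * (c - theta) -> a1 < a2 ->
      rent_diss b c theta a2 < rent_diss b c theta a1) /\
  (* hence maximised exactly at b^2 = a (c - theta) *)
  (forall a : R, a != b ^+ 2 / (c - theta) ->
      rent_diss b c theta a < rent_diss b c theta (b ^+ 2 / (c - theta))).
Proof.
move=> hb _ _ theta_lt_c; have hk : 0 < c - theta by rewrite subr_gt0.
split; first exact: exists_equilibrium.
split.
  move=> a mu nu heq; have [hmu hnu _ _] := heq.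
  rewrite total_effortE //; congr (_%:E).
  by apply: moment_equilibrium_total => //; exact: is_equilibrium_moments.
split; first exact: rent_diss_lt_pure.
split; last exact: rent_diss_max.
by move=> a1 a2 /ltW; exact: rent_diss_gt_mixed.
Qed.
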